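(* Let $g(t)=\sum_{n\ge0}g_nt^n$ be a real formal power series with $g_0=1$ and $f(t)=\sum_{n\ge1}f_nt^n$ a real formal power series with $f_1\neq0$. Put $z_0=f_1$, $w_0=g_1$ and let \[ Z(t)=\frac{f(t)-z_0t\,g(t)}{f(t)}+z_0=\sum_{k\ge0}z_kt^k,\qquad W(t)=\frac{(1-w_0t)g(t)-1}{f(t)}+w_0=\sum_{k\ge0}w_kt^k . \] Let $J$ be the infinite matrix with $0$th column $(w_0,w_1,w_2,\dots)^T$, $1$st column $(z_0,z_1,z_2,\dots)^T$, entries $J_{i,i+1}=1$ for $i\ge1$, and all other entries $0$. If $J$ is totally positive, then the quasi-Riordan array $[g,f]$ is totally positive.
   Context: The quasi-Riordan array $[g,f]$ is the infinite lower triangular matrix $(r_{n,k})_{n,k\ge0}$ with $r_{n,0}=g_n$ and $r_{n,k}=f_{n-k+1}$ for $k\ge1$ (with $f_j=0$ for $j\le0$); its columns have generating functions $g,f,tf,t^2f,\dots$. The matrix $J$ is called the production matrix of $[g,f]$ (the data $A(t)=1$, $Z$, $W$ being the $A$-, $Z$-, $W$-sequences of $[g,f]$). An infinite matrix is totally positive (TP) if all its minors are nonnegative. *)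

From HB Require Import structures.
From mathcomp Require Import all_boot all_order all_algebra.
Set Implicit Arguments. Unset Strict Implicit. Unset Printing Implicit Defensive.
Import Order.TTheory GRing.Theory Num.Theory.
Local Open Scope ring_scope.

Section Defs.
Variable R : fieldType.

(* first n+1 coefficients of the multiplicative inverse of a series a with a 0 != 0,
   via the standard recursion  b_0 = 1/a_0,
   b_{n+1} = -(1/a_0) * sum_{i=0}^{n} a_{i+1} b_{n-i}. *)
Fixpoint ps_inv_seq (a : nat -> R) (n : nat) : seq R :=
  match n with
  | 0 => [:: (a 0%N)^-1]
  | m.+1 => let s := ps_inv_seq a m in
            rcons s (- (a 0%N)^-1 * \sum_(i < m.+1) a i.+1 * nth 0 s (m - i))
  end.

Definition ps_inv (a : nat -> R) (n : nat) : R := nth 0 (ps_inv_seq a n) n.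

Definition ps_mul (a b : nat -> R) (n : nat) : R :=
  \sum_(i < n.+1) a i * b (n - i)%N.

(* division by t of a series with zero constant term *)
Definition ps_divt (a : nat -> R) (n : nat) : R := a n.+1.

Definition ps_mult (a : nat -> R) (n : nat) : R :=
  if n is m.+1 then a m else 0.

(* quotient a / b of series with a_0 = b_0 = 0 and b_1 != 0:
   (a/t) * (b/t)^{-1} *)
Definition ps_div (a b : nat -> R) : nat -> R :=
  ps_mul (ps_divt a) (ps_inv (ps_divt b)).

(* Z-sequence: Z(t) = (f(t) - z0 t g(t)) / f(t) + z0, z0 = f_1 *)
Definition Zseq (g f : nat -> R) (n : nat) : R :=
  ps_div (fun k => f k - f 1%N * ps_mult g k) f n + (n == 0%N)%:R * f 1%N.

(* W-sequence: W(t) = ((1 - w0 t) g(t) - 1) / f(t) + w0, w0 = g_1 *)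
Definition Wseq (g f : nat -> R) (n : nat) : R :=
  ps_div (fun k => g k - g 1%N * ps_mult g k - (k == 0%N)%:R) f n
  + (n == 0%N)%:R * g 1%N.

Definition Jmat (g f : nat -> R) (i j : nat) : R :=
  if j == 0%N then Wseq g f i
  else if j == 1%N then Zseq g f i
  else if j == i.+1 then 1 else 0.

Definition quasi_riordan (g f : nat -> R) (n k : nat) : R :=
  if k == 0%N then g n
  else if (k <= n)%N then f (n - k).+1 else 0.
End Defs.

Definition totally_positive (R : numDomainType) (M : nat -> nat -> R) : Prop :=
  forall (k : nat) (r c : 'I_k -> nat),
    (forall i j : 'I_k, (i < j)%N -> (r i < r j)%N) ->
    (forall i j : 'I_k, (i < j)%N -> (c i < c j)%N) ->
    0 <= \det (\matrix_(i < k, j < k) M (r i) (c j)).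

From HB Require Import structures.
From mathcomp Require Import all_boot all_order all_algebra all_fingroup ring.
Set Implicit Arguments. Unset Strict Implicit. Unset Printing Implicit Defensive.
Import Order.TTheory GRing.Theory Num.Theory.
Local Open Scope ring_scope.

(* The quasi-Riordan array R = [g,f] is lower triangular with first row
   (1, 0, 0, ...), and J is its production matrix: R with its first row deleted
   equals R J.  Coefficientwise this is the pair of series identities
   f Z = f - z0 t g + z0 f and f W = (1 - w0 t) g - 1 + w0 f defining Z and W.
   A minor of R using row 0 reduces, by expansion along that row, to a smaller
   minor; a minor avoiding row 0 is a minor of (rows of R) * J, which by the
   Cauchy-Binet formula is a sum of products of minors of R with smaller row
   indices and minors of J.  Induction on the largest row index concludes. *)

Section Series.
Variable R : fieldType.
Implicit Types a b c : nat -> R.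

Definition ps_Xn (j n : nat) : R := (n == j)%:R.

Definition ps_trunc (N : nat) a : {poly R} := \poly_(i < N) a i.

Lemma ps_mul_ext n a a' b b' : (forall i, (i <= n)%N -> a i = a' i) ->
  (forall i, (i <= n)%N -> b i = b' i) -> ps_mul a b n = ps_mul a' b' n.
Proof.
by move=> ha hb; apply: eq_bigr => i _; rewrite ha ?hb ?leq_subr // -ltnS.
Qed.

Lemma ps_mul_coef (p q : {poly R}) n :
  ps_mul (fun i => p`_i) (fun i => q`_i) n = (p * q)`_n.
Proof. by rewrite coefM. Qed.

Lemma ps_mul_trunc N a b n : (n < N)%N ->
  ps_mul a b n = (ps_trunc N a * ps_trunc N b)`_n.
Proof.
move=> ltnN; rewrite -ps_mul_coef.
by apply: ps_mul_ext => i lein; rewrite coef_poly (leq_ltn_trans lein ltnN).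
Qed.

Lemma ps_mulC a b n : ps_mul a b n = ps_mul b a n.
Proof. by rewrite !(@ps_mul_trunc n.+1) // mulrC. Qed.

Lemma ps_mulA a b c n : ps_mul a (ps_mul b c) n = ps_mul (ps_mul a b) c n.
Proof.
have trunc_coef u i : (i <= n)%N -> u i = (ps_trunc n.+1 u)`_i.
  by move=> lein; rewrite coef_poly ltnS lein.
transitivity ((ps_trunc n.+1 a * (ps_trunc n.+1 b * ps_trunc n.+1 c))`_n).
  rewrite -ps_mul_coef; apply: ps_mul_ext => i lein; first exact: trunc_coef.
  by rewrite (@ps_mul_trunc n.+1).
rewrite mulrA -ps_mul_coef.
apply: ps_mul_ext => i lein; last by rewrite -trunc_coef.
by rewrite (@ps_mul_trunc n.+1).
Qed.

Lemma ps_mulDl a b c n :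
  ps_mul (fun i => a i + b i) c n = ps_mul a c n + ps_mul b c n.
Proof. by rewrite -big_split; apply: eq_bigr => i _; rewrite mulrDl. Qed.

Lemma ps_mul_Xn j b n :
  ps_mul (ps_Xn j) b n = if (j <= n)%N then b (n - j)%N else 0.
Proof.
rewrite /ps_mul /ps_Xn; case: leqP => [lejn | ltnj].
  rewrite (bigD1 (Ordinal (leq_ltn_trans lejn (ltnSn n)))) //= eqxx mul1r.
  by rewrite big1 ?addr0 // => i /negPf; rewrite -val_eqE /= => ->; rewrite mul0r.
rewrite big1 // => i _; case: eqP => [eij|]; last by rewrite mul0r.
by move: (ltn_ord i); rewrite ltnS eij leqNgt ltnj.
Qed.

Lemma size_ps_inv_seq a n : size (ps_inv_seq a n) = n.+1.
Proof. by elim: n => [|n IH] //=; rewrite size_rcons IH. Qed.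

Lemma nth_ps_inv_seq a n i : (i <= n)%N -> nth 0 (ps_inv_seq a n) i = ps_inv a i.
Proof.
elim: n => [|n IH]; first by rewrite leqn0 => /eqP ->.
rewrite leq_eqVlt => /orP[/eqP -> // | ltin].
by rewrite /= nth_rcons size_ps_inv_seq ltin IH.
Qed.

Lemma ps_invS a n : ps_inv a n.+1 =
  - (a 0%N)^-1 * \sum_(i < n.+1) a i.+1 * ps_inv a (n - i).
Proof.
rewrite /ps_inv /= nth_rcons size_ps_inv_seq ltnn eqxx; congr (_ * _).
by apply: eq_bigr => i _; rewrite nth_ps_inv_seq // leq_subr.
Qed.

Lemma ps_mul_inv a n : a 0%N != 0 -> ps_mul a (ps_inv a) n = ps_Xn 0 n.
Proof.
move=> a0; case: n => [|n]; first by rewrite /ps_mul big_ord1 /ps_inv /= mulfV.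
rewrite /ps_mul big_ord_recl subn0 ps_invS mulrA mulrN mulfV // mulN1r.
by rewrite addrC; apply/eqP; rewrite subr_eq0; apply/eqP/eq_bigr => i _.
Qed.

Section Quotient.
Variable f : nat -> R.
Hypothesis f1 : f 1%N != 0.

Lemma ps_mul_div_divt a n : ps_mul (ps_div a f) (ps_divt f) n = a n.+1.
Proof.
rewrite ps_mulC /ps_div.
transitivity (ps_mul (ps_mul (ps_divt f) (ps_inv (ps_divt f))) (ps_divt a) n).
  by rewrite -ps_mulA; apply: ps_mul_ext => // i _; apply: ps_mulC.
rewrite (@ps_mul_ext n _ (ps_Xn 0) _ (ps_divt a)) ?ps_mul_Xn ?subn0 // => i _.
exact: ps_mul_inv.
Qed.

Lemma ps_div0 a : a 1%N = 0 -> ps_div a f 0 = 0.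
Proof.
move=> a1; have := ps_mul_div_divt a 0; rewrite /ps_mul big_ord1 a1 => /eqP.
by rewrite mulf_eq0 (negPf f1) orbF => /eqP.
Qed.

Lemma ps_mul_div_shift a x n :
  ps_mul (fun k => ps_div a f k + (k == 0)%N%:R * x) (ps_divt f) n
  = a n.+1 + x * f n.+1.
Proof.
rewrite ps_mulDl ps_mul_div_divt; congr (_ + _).
rewrite /ps_mul big_ord_recl big1 ?addr0 => [|i _]; last by rewrite mul0r mul0r.
by rewrite mul1r subn0.
Qed.

End Quotient.
End Series.

Lemma increasing_perm_of_injective k m (phi : 'I_k -> 'I_m) : injective phi ->
  exists p : 'S_k, {homo (fun i => phi (p i)) : i j / (i < j)%N}.
Proof.
move=> phi_inj; pose t := [tuple val (phi i) | i < k].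
have [p sort_t] : exists p : 'S_k, sort leq t = [tuple tnth t (p i) | i < k].
  by apply/tuple_permP; rewrite perm_sort.
have sorted_t : sorted ltn (sort leq t).
  rewrite ltn_sorted_uniq_leq sort_uniq (sort_sorted leq_total) andbT.
  by rewrite map_inj_uniq ?enum_uniq // => i j /val_inj /phi_inj.
have nth_sort (l : 'I_k) : nth 0%N (sort leq t) l = phi (p l).
  rewrite sort_t (nth_map l) ?size_enum_ord //.
  by rewrite nth_ord_enum tnth_map tnth_ord_tuple.
exists p => i j ltij; rewrite -!nth_sort.
by apply: (sorted_ltn_nth ltn_trans) => //; rewrite inE size_sort size_tuple.
Qed.

Section CauchyBinet.
Variable R : comRingType.

Lemma det_mulmx_rowsub k m (A : 'M[R]_(k, m)) (B : 'M[R]_(m, k)) :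
  \det (A *m B) =
    \sum_(phi : {ffun 'I_k -> 'I_m}) (\prod_i A i (phi i)) * \det (rowsub phi B).
Proof.
rewrite /determinant.
under eq_bigr => s _ do under eq_bigr => i _ do rewrite mxE.
under eq_bigr => s _ do
  rewrite (bigA_distr_bigA (fun i j => A i j * B j (s i))) big_distrr.
rewrite exchange_big /=; apply: eq_bigr => phi _.
rewrite big_distrr; apply: eq_bigr => s _ /=.
rewrite big_split /= mulrCA; congr (_ * (_ * _)).
by apply: eq_bigr => i _; rewrite mxE.
Qed.

Lemma det_rowsub_perm k m (B : 'M[R]_(m, k)) (phi : 'I_k -> 'I_m) (p : 'S_k) :
  \det (rowsub (phi \o p) B) = (-1) ^+ p * \det (rowsub phi B).
Proof. by rewrite rowsub_comp -row_permEsub row_permE det_mulmx det_perm. Qed.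

Lemma det_colsub_perm k m (A : 'M[R]_(k, m)) (phi : 'I_k -> 'I_m) (p : 'S_k) :
  \det (colsub (phi \o p) A) = (-1) ^+ p * \det (colsub phi A).
Proof.
by rewrite colsub_comp -col_permEsub col_permE det_mulmx det_perm odd_permV mulrC.
Qed.

(* A symmetrized Cauchy-Binet formula: summing over all maps rather than over
   increasing ones avoids splitting injective maps into an increasing map and
   a permutation; the factor k! is harmless for sign arguments. *)
Lemma sum_det_colsub_rowsub k m (A : 'M[R]_(k, m)) (B : 'M[R]_(m, k)) :
  \sum_(phi : {ffun 'I_k -> 'I_m}) \det (colsub phi A) * \det (rowsub phi B)
  = k`!%:R * \det (A *m B).
Proof.
transitivity (\sum_(s : 'S_k) \sum_(phi : {ffun 'I_k -> 'I_m})
    (-1) ^+ s * (\prod_i A i (phi (s i))) * \det (rowsub phi B)).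
  rewrite exchange_big /=; apply: eq_bigr => phi _; rewrite big_distrl.
  apply: eq_bigr => s _ /=; congr (_ * _ * _).
  by apply: eq_bigr => i _; rewrite mxE.
rewrite -card_Sn -sumr_const mulr_suml; apply: eq_bigr => s _.
rewrite mul1r det_mulmx_rowsub.
pose shift (psi : {ffun 'I_k -> 'I_m}) := [ffun i => psi ((s^-1)%g i)].
have shift_inj : injective shift.
  move=> psi1 psi2 /ffunP eq12; apply/ffunP => i.
  by have := eq12 (s i); rewrite !ffunE permK.
rewrite (reindex_inj shift_inj); apply: eq_bigr => psi _.
have -> : \prod_i A i (shift psi (s i)) = \prod_i A i (psi i).
  by apply: eq_bigr => i _; rewrite ffunE permK.
have -> : rowsub (shift psi) B = rowsub (psi \o (s^-1)%g) B.
  by apply: eq_rowsub => i; rewrite ffunE.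
by rewrite det_rowsub_perm odd_permV mulrCA !mulrA -expr2 sqrr_sign mul1r.
Qed.

End CauchyBinet.

Lemma det_mulmx_ge0 (R : numDomainType) k m (A : 'M[R]_(k, m)) (B : 'M[R]_(m, k)) :
  (forall s : 'I_k -> 'I_m, {homo s : i j / (i < j)%N} ->
     0 <= \det (colsub s A) * \det (rowsub s B)) ->
  0 <= \det (A *m B).
Proof.
move=> minors_ge0; have fact_gt0 : 0 < k`!%:R :> R by rewrite ltr0n fact_gt0.
rewrite -(pmulr_rge0 _ fact_gt0) -sum_det_colsub_rowsub; apply: sumr_ge0 => phi _.
have [/injectiveP phi_inj | /injectivePn [i [j neq_ij eq_phi]]] :=
  boolP (injectiveb phi).
  have [p p_incr] := increasing_perm_of_injective phi_inj.
  have := minors_ge0 _ p_incr.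
  by rewrite det_colsub_perm det_rowsub_perm mulrACA -expr2 sqrr_sign mul1r.
rewrite [\det (rowsub _ _)](determinant_alternate neq_ij) ?mulr0 // => l.
by rewrite !mxE eq_phi.
Qed.

Definition minor_mx (R : Type) (M : nat -> nat -> R) k (r c : 'I_k -> nat) :
    'M[R]_k :=
  \matrix_(i < k, j < k) M (r i) (c j).

Section ProductionMatrix.
Variable R : numDomainType.
Variables M P : nat -> nat -> R.
Hypothesis M_row0 : forall j, M 0%N j = (j == 0)%N%:R.
Hypothesis M_lower : forall n j, (n < j)%N -> M n j = 0.
Hypothesis M_production : forall n j, M n.+1 j = \sum_(l < n.+1) M n l * P l j.

Lemma production_sum_widen N n j : (n < N)%N ->
  M n.+1 j = \sum_(l < N) M n l * P l j.
Proof.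
move=> ltnN; rewrite M_production (big_ord_widen N (fun l => M n l * P l j) ltnN).
rewrite big_mkcond; apply: eq_bigr => l _.
by case: ltnP => // ltnl; rewrite M_lower ?mul0r.
Qed.

Lemma det_minor_row0 k (r c : 'I_k.+1 -> nat) :
  r ord0 = 0%N -> {homo c : i j / (i < j)%N} ->
  \det (minor_mx M r c) =
    (c ord0 == 0)%N%:R * \det (minor_mx M (r \o lift ord0) (c \o lift ord0)).
Proof.
move=> r0 c_incr; rewrite (expand_det_row _ ord0) big_ord_recl big1 => [|j _].
  rewrite addr0 !mxE r0 M_row0 /cofactor /= expr0 mul1r; congr (_ * \det _).
  by apply/matrixP => i j; rewrite !mxE.
have c_pos : (0 < c (lift ord0 j))%N.
  by apply: leq_ltn_trans (c_incr ord0 _ _); rewrite ?lift0.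
by rewrite !mxE r0 M_row0 eqn0Ngt c_pos mul0r.
Qed.

Lemma minor_shift_mulmx N k (r c : 'I_k -> nat) : (forall i, 0 < r i <= N)%N ->
  minor_mx M r c =
    (\matrix_(i < k, l < N) M (r i).-1 l) *m (\matrix_(l < N, j < k) P l (c j)).
Proof.
move=> r_range; apply/matrixP => i j; have /andP [r_pos r_le] := r_range i.
rewrite !mxE -(prednK r_pos) (@production_sum_widen N) ?prednK //.
by apply: eq_bigr => l _; rewrite !mxE.
Qed.

Hypothesis P_tp : totally_positive P.

Lemma minor_ge0_rows_lt N k (r c : 'I_k -> nat) :
  {homo r : i j / (i < j)%N} -> {homo c : i j / (i < j)%N} ->
  (forall i, r i < N)%N -> 0 <= \det (minor_mx M r c).
Proof.
elim: N k r c => [|N IHN] k.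
  by case: k => [|k] r c _ _ r_lt; [rewrite det_mx00 | have := r_lt ord0].
elim: k => [|k IHk] r c r_incr c_incr r_lt; first by rewrite det_mx00.
have lift_incr (u : 'I_k.+1 -> nat) : {homo u : i j / (i < j)%N} ->
    {homo u \o lift ord0 : i j / (i < j)%N}.
  by move=> u_incr i j lt_ij; apply: u_incr; rewrite !lift0.
have [r0 | r0_pos] := posnP (r ord0).
  rewrite det_minor_row0 // mulr_ge0 ?ler0n //.
  by apply: IHk; [exact: lift_incr | exact: lift_incr | move=> i; apply: r_lt].
have r_pos i : (0 < r i)%N.
  have [i0 | i_pos] := posnP i; last exact: leq_ltn_trans (r_incr ord0 i i_pos).
  by rewrite (_ : i = ord0) //; apply: val_inj.
rewrite (@minor_shift_mulmx N) => [|i]; last by rewrite r_pos -ltnS r_lt.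
apply: det_mulmx_ge0 => s s_incr; apply: mulr_ge0.
  rewrite (_ : colsub _ _ = minor_mx M (fun i => (r i).-1) (fun j => s j)).
    apply: IHN => // [i j lt_ij | i]; last by rewrite -ltnS prednK.
    by rewrite -ltnS !prednK //; apply: r_incr.
  by apply/matrixP => i j; rewrite !mxE.
rewrite (_ : rowsub _ _ = minor_mx P (fun i => s i) c); first exact: P_tp.
by apply/matrixP => i j; rewrite !mxE.
Qed.

Lemma totally_positive_production : totally_positive M.
Proof.
move=> k r c r_incr c_incr; apply: (@minor_ge0_rows_lt (\max_i r i).+1) => // i.
by rewrite ltnS (leq_bigmax i).
Qed.

End ProductionMatrix.

Section QuasiRiordan.
Variable R : fieldType.
Variables g f : nat -> R.
Local Notation Rm := (quasi_riordan g f).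
Local Notation Jm := (Jmat g f).

Lemma quasi_riordan_lower n k : (n < k)%N -> Rm n k = 0.
Proof.
move=> ltnk; rewrite /quasi_riordan leqNgt ltnk /=.
by case: eqP ltnk => // ->.
Qed.

Lemma quasi_riordan_row_sum (X : nat -> R) n :
  \sum_(k < n.+1) Rm n k * X k = (g n - f n.+1) * X 0%N + ps_mul X (ps_divt f) n.
Proof.
rewrite /ps_mul !big_ord_recl /= subn0 addrA [X 0%N * _]mulrC -mulrDl subrK.
congr (_ + _).
by apply: eq_bigr => k _; rewrite /quasi_riordan /bump /= add1n ltn_ord mulrC.
Qed.

Hypothesis g0 : g 0%N = 1.
Hypothesis f1 : f 1%N != 0.

Lemma quasi_riordan_row0 k : Rm 0 k = (k == 0)%N%:R.
Proof. by rewrite /quasi_riordan; case: k. Qed.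

Lemma Wseq0 : Wseq g f 0 = g 1%N.
Proof. by rewrite /Wseq ps_div0 //= ?add0r ?mul1r // g0 mulr1 subrr subr0. Qed.

Lemma Zseq0 : Zseq g f 0 = f 1%N.
Proof. by rewrite /Zseq ps_div0 //= ?add0r ?mul1r // g0 mulr1 subrr. Qed.

Lemma quasi_riordan_production n c :
  Rm n.+1 c = \sum_(k < n.+1) Rm n k * Jm k c.
Proof.
rewrite (quasi_riordan_row_sum (fun k => Jm k c)); case: c => [|[|c]].
- rewrite /Jmat /= Wseq0 (ps_mul_div_shift f1) /quasi_riordan /=; ring.
- rewrite /Jmat /= Zseq0 (ps_mul_div_shift f1) /quasi_riordan /= subn1; ring.
- rewrite /Jmat /= mulr0 add0r.
  rewrite (@ps_mul_ext _ n _ (@ps_Xn R c.+1) _ (ps_divt f)) => [|k _|//].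
    by rewrite ps_mul_Xn /quasi_riordan /= ltnS subSS.
  by rewrite /ps_Xn eqSS eq_sym; case: eqP.
Qed.

End QuasiRiordan.

Theorem theorem3p2 (R : realFieldType) (g f : nat -> R) :
  g 0%N = 1 -> f 0%N = 0 -> f 1%N != 0 ->
  totally_positive (Jmat g f) ->
  totally_positive (quasi_riordan g f).
Proof.
move=> g0 _ f1; apply: totally_positive_production.
- exact: quasi_riordan_row0.
- exact: quasi_riordan_lower.
- exact: quasi_riordan_production.
Qed.
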